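(* Let $G$ be a finite simple graph on the vertex set $V(G)=\{x_1,\ldots,x_n\}$ with $n\geq 1$, and let $NI(G)\subseteq R=\mathbf{k}[x_1,\ldots,x_n]$ be its closed neighborhood ideal. Then every minimal prime ideal of $NI(G)$ is of the form $\langle x_{j_1},\ldots,x_{j_r}\rangle$, where $\{x_{j_1},\ldots,x_{j_r}\}$ is a minimal dominating set of $G$. Consequently $$\operatorname{ht}(NI(G))=\gamma(G),\qquad \operatorname{bight}(NI(G))=\gamma'_G,$$ and $$\operatorname{ht}(NI(G)^\vee)=\min\{\deg_G(x_i)\,:\, x_i\in V(G)\}+1.$$
   Context: $\mathbf{k}$ is a field and the vertices of $G$ are identified with the variables of $R$. For a vertex $x_i$, $N[x_i]=\{x_i\}\cup\{x_j : \{x_i,x_j\}\in E(G)\}$ is its closed neighborhood. The closed neighborhood ideal is $NI(G)=\langle \prod_{x_j\in N[x_i]}x_j : x_i\in V(G)\rangle$. A set $S\subseteq V(G)$ is a dominating set if $S\cap N[x]\neq\emptyset$ for every vertex $x$; it is a minimal dominating set if no proper subset is dominating. $\gamma(G)$ is the minimum size of a dominating set and $\gamma'_G=\max\{|C| : C \text{ a minimal dominating set of } G\}$. $\operatorname{bight}(I)$ is the maximum height of a minimal prime of $I$. For a squarefree monomial ideal $I$ with minimal primes $P_1,\ldots,P_m$ (each generated by variables), its Alexander dual is $I^\vee=\langle \prod_{x\in P_k}x : 1\le k\le m\rangle$. *)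

From HB Require Import structures.
From mathcomp Require Import all_boot all_order all_algebra.
From mathcomp Require Import mpoly.

Set Implicit Arguments.
Unset Strict Implicit.
Unset Printing Implicit Defensive.

Import GRing.Theory.
Local Open Scope ring_scope.

Section Ideals.
Variable R : comNzRingType.

Definition is_ideal (I : R -> Prop) : Prop :=
  [/\ I 0, (forall a b, I a -> I b -> I (a + b)) &
      (forall r a, I a -> I (r * a))].

Definition gen_ideal (S : R -> Prop) : R -> Prop :=
  fun p => forall J, is_ideal J -> (forall s, S s -> J s) -> J p.

Definition subid (I J : R -> Prop) : Prop := forall p, I p -> J p.
Definition eqid (I J : R -> Prop) : Prop := forall p, I p <-> J p.

Definition is_prime (P : R -> Prop) : Prop :=
  [/\ is_ideal P, ~ P 1 & forall a b, P (a * b) -> P a \/ P b].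

Definition minimal_prime (I P : R -> Prop) : Prop :=
  [/\ is_prime P, subid I P &
      forall Q, is_prime Q -> subid I Q -> subid Q P -> subid P Q].

Definition prime_chain_to (P : R -> Prop) (h : nat) : Prop :=
  exists c : nat -> (R -> Prop),
    [/\ forall i, i <= h -> is_prime (c i),
        eqid (c h) P &
        forall i, i < h -> subid (c i) (c i.+1) /\ ~ subid (c i.+1) (c i)]%N.

Definition prime_height (P : R -> Prop) (h : nat) : Prop :=
  prime_chain_to P h /\ forall h', prime_chain_to P h' -> (h' <= h)%N.

Definition ideal_height (I : R -> Prop) (h : nat) : Prop :=
  (exists P, [/\ is_prime P, subid I P & prime_height P h]) /\
  (forall P h', is_prime P -> subid I P -> prime_height P h' -> (h <= h')%N).

Definition ideal_bigheight (I : R -> Prop) (h : nat) : Prop :=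
  (exists P, minimal_prime I P /\ prime_height P h) /\
  (forall P h', minimal_prime I P -> prime_height P h' -> (h' <= h)%N).

End Ideals.

Section Graphs.
Variables (n : nat) (e : rel 'I_n).

Definition simple_graph : Prop := ssrbool.symmetric e /\ irreflexive e.

Definition cnbhd (x : 'I_n) : {set 'I_n} := x |: [set y | e x y].

Definition deg (x : 'I_n) : nat := #|[set y | e x y]|.

Definition dominating (S : {set 'I_n}) : bool :=
  [forall x, S :&: cnbhd x != set0].

Definition minimal_dominating (S : {set 'I_n}) : bool := minset dominating S.

(* gamma(G) : minimum size of a dominating set (setT is dominating) *)
Definition gamma : nat := \big[minn/n]_(S : {set 'I_n} | dominating S) #|S|.

Definition gamma' : nat := \max_(S : {set 'I_n} | minimal_dominating S) #|S|.

Definition min_deg : nat := \big[minn/n]_(x : 'I_n) deg x.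

End Graphs.

Section Poly.
Variables (k : fieldType) (n : nat) (e : rel 'I_n).

Definition var_ideal (S : {set 'I_n}) : {mpoly k[n]} -> Prop :=
  gen_ideal (fun p => exists2 j, j \in S & p = 'X_j).

Definition NI : {mpoly k[n]} -> Prop :=
  gen_ideal (fun p => exists x : 'I_n, p = \prod_(j in cnbhd e x) 'X_j).

Definition NI_dual : {mpoly k[n]} -> Prop :=
  gen_ideal (fun p => exists S : {set 'I_n},
     minimal_prime NI (var_ideal S) /\ p = \prod_(j in S) 'X_j).

End Poly.

From HB Require Import structures.
From mathcomp Require Import all_boot all_order all_algebra.
From mathcomp Require Import mpoly zify.
From Stdlib Require Import Classical ClassicalEpsilon.

Set Implicit Arguments.
Unset Strict Implicit.
Unset Printing Implicit Defensive.
Import Order.TTheory GRing.Theory.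
Local Open Scope ring_scope.

(* An ideal generated by variables, <x_j : j in S>, is prime: it is the
   kernel of the ring morphism killing the x_j, j in S.  It contains the
   monomial of a set A iff A meets S, so it contains NI(G) iff S is
   dominating.  A prime P containing NI(G) contains the variable ideal of the
   dominating set {j | x_j in P}; hence the minimal primes of NI(G) are the
   <S> with S minimal dominating.

   <S> has height |S|: adjoining the variables one at a time gives a chain of
   that length, and a longer chain, extended by the remaining variables,
   would have length > n.  The bound dim k[x_1..x_n] <= n is proved by
   counting: given primes P_0 < ... < P_L and f_i in P_(i+1) \ P_i of degree
   <= E, the products f_0^r_0 ... f_(L-1)^r_(L-1) with r_i <= M are linearly
   independent, so (M+1)^L of them fit in the polynomials of degree <= LME,
   which is impossible for L > n and M = (L(E+1))^n.

   Finally a prime containing NI(G)^v contains all the variables of some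
   closed neighbourhood N[x]; otherwise the variables outside it would form a
   dominating set, whose minimal dominating subsets give monomials of
   NI(G)^v outside the prime. *)

Section IdealTheory.
Variable R : comNzRingType.
Implicit Types (I P Q S : R -> Prop) (a b r : R).

Lemma ideal0 I : is_ideal I -> I 0. Proof. by case. Qed.

Lemma idealD I a b : is_ideal I -> I a -> I b -> I (a + b).
Proof. by case=> _ + _; apply. Qed.

Lemma idealMl I r a : is_ideal I -> I a -> I (r * a).
Proof. by case=> _ _; apply. Qed.

Lemma idealMr I r a : is_ideal I -> I a -> I (a * r).
Proof. by rewrite mulrC; apply: idealMl. Qed.

Lemma idealB I a b : is_ideal I -> I a -> I b -> I (a - b).
Proof. by move=> hI Ia Ib; rewrite -mulN1r; apply/(idealD hI)/(idealMl _ hI). Qed.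

Lemma gen_ideal_is_ideal S : is_ideal (gen_ideal S).
Proof.
split=> [J hJ _ | a b Sa Sb J hJ SJ | r a Sa J hJ SJ]; first exact: ideal0.
- by apply: idealD => //; [apply: Sa | apply: Sb].
- by apply: idealMl => //; apply: Sa.
Qed.

Lemma mem_gen_ideal S a : S a -> gen_ideal S a.
Proof. by move=> Sa J _; apply. Qed.

Lemma gen_ideal_min S I : is_ideal I -> (forall a, S a -> I a) ->
  subid (gen_ideal S) I.
Proof. by move=> hI SI a; apply. Qed.

Lemma prime_is_ideal P : is_prime P -> is_ideal P. Proof. by case. Qed.

Lemma prime_neq1 P : is_prime P -> ~ P 1. Proof. by case. Qed.

Lemma primeM P a b : is_prime P -> P (a * b) -> P a \/ P b.
Proof. by case=> _ _; apply. Qed.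

Lemma prime_expN P a m : is_prime P -> ~ P a -> ~ P (a ^+ m).
Proof.
move=> hP Pa; elim: m => [|m IHm]; first by rewrite expr0; apply: prime_neq1.
by rewrite exprS => /(primeM hP) [].
Qed.

Lemma prime_prod P (T : finType) (A : {set T}) (F : T -> R) :
  is_prime P -> P (\prod_(j in A) F j) -> exists2 j, j \in A & P (F j).
Proof.
move=> hP; elim/big_rec: _ => [/(prime_neq1 hP) // | j a jA IHa].
by case/(primeM hP) => [Pj | /IHa]; first exists j.
Qed.

(* The sum is [f ^+ r * u] with [u] in [P], hence in [Q]; and [u - g r] is a
   multiple of [f], hence in [Q] too. *)
Lemma prime_pow_combination P Q f M (g : 'I_M.+1 -> R) (r : 'I_M.+1) :
  is_prime P -> is_ideal Q -> subid P Q -> Q f -> ~ P f ->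
  P (\sum_(s < M.+1) f ^+ s * g s) -> (forall s : 'I_M.+1, (s < r)%N -> g s = 0) ->
  Q (g r).
Proof.
move=> hP hQ PQ Qf Pf Psum g0.
pose u := \sum_(s < M.+1) f ^+ (s - r) * g s.
have sum_u : \sum_(s < M.+1) f ^+ s * g s = f ^+ r * u.
  rewrite mulr_sumr; apply: eq_bigr => s _.
  by case: (ltnP s r) => [/g0 -> | le_rs]; rewrite ?mulr0 // mulrA -exprD subnKC.
have Qu : Q u.
  by apply: (PQ); move: Psum; rewrite sum_u => /(primeM hP) [/(prime_expN hP Pf)|].
have Qu_gr : Q (u - g r).
  rewrite /u (bigD1 r) //= subnn mul1r addrAC subrr add0r.
  elim/big_ind: _ => [|a b|s ne_sr]; [exact: ideal0 | exact: idealD |].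
  case: (ltnP s r) => [/g0 -> | le_rs]; first by rewrite mulr0; apply: ideal0.
  have : (0 < s - r)%N by rewrite subn_gt0 ltn_neqAle le_rs andbT eq_sym.
  by case: (s - r)%N => // m _; rewrite exprS -mulrA; apply: idealMr.
have -> : g r = u - (u - g r) by rewrite opprB addrC subrK.
exact: idealB.
Qed.

Lemma prime_chain_to_eqid P Q h : prime_chain_to P h -> eqid P Q ->
  prime_chain_to Q h.
Proof. by case=> c [c1 c2 c3] PQ; exists c; split=> // a; rewrite c2. Qed.

Lemma prime_chain_to0 P : is_prime P -> prime_chain_to P 0.
Proof. by move=> hP; exists (fun _ => P). Qed.

Lemma prime_chain_toS Q P h : prime_chain_to Q h -> is_prime P -> subid Q P ->
  ~ subid P Q -> prime_chain_to P h.+1.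
Proof.
case=> c [c1 c2 c3] hP QP PQ.
exists (fun i => if (i <= h)%N then c i else P); split; rewrite ?ltnn //.
  by move=> i _; case: ifP => // /c1.
move=> i; rewrite ltnS; case: ltngtP => // [lt_ih _ | -> _]; first exact: c3.
by split=> [a /c2 /QP // | PQ']; apply: PQ => a /PQ' /c2.
Qed.

End IdealTheory.

Section VarIdeal.
Variables (k : fieldType) (n : nat).
Local Notation poly := {mpoly k[n]}.
Local Notation VI := (@var_ideal k n).
Implicit Types (S T : {set 'I_n}) (p : poly).

Definition kill_var S (j : 'I_n) : poly := if j \in S then 0 else 'X_j.

Definition kill_vars S : poly -> poly := mmap (@mpolyC n k) (kill_var S).
HB.instance Definition _ S := GRing.RMorphism.on (kill_vars S).

Lemma kill_varsXU S j : kill_vars S 'X_j = kill_var S j.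
Proof. by rewrite /kill_vars mmapX -/(mmap1 _ _) mmap1U. Qed.

Lemma var_ideal_is_ideal S : is_ideal (VI S).
Proof. exact: gen_ideal_is_ideal. Qed.

Lemma var_ideal_var S j : j \in S -> VI S 'X_j.
Proof. by move=> jS; apply: mem_gen_ideal; exists j. Qed.

Lemma var_ideal_kill_vars S : subid (VI S) (fun p => kill_vars S p = 0).
Proof.
apply: gen_ideal_min => [|_ [j jS ->]]; last by rewrite kill_varsXU /kill_var jS.
split=> [|a b ha hb|r a ha]; first exact: rmorph0.
  by rewrite rmorphD /= ha hb addr0.
by rewrite rmorphM /= ha mulr0.
Qed.

Lemma var_idealX_or_kill_varsX S m : VI S 'X_[m] \/ kill_vars S 'X_[m] = 'X_[m].
Proof.
have [j /andP [jS mj_gt0] | no_var] := pickP [pred j | (j \in S) && (0 < m j)%N].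
  left; rewrite mpolyXE_id (bigD1 j) //= -(prednK mj_gt0) exprS -mulrA.
  exact: idealMr (var_ideal_is_ideal S) (var_ideal_var jS).
right; rewrite /kill_vars mmapX [RHS]mpolyXE_id; apply: eq_bigr => j _.
rewrite /kill_var; case: ifP => // jS.
by move: (no_var j); rewrite /= jS lt0n => /negbFE /eqP ->; rewrite !expr0.
Qed.

Lemma var_ideal_sub_kill_vars S p : VI S (p - kill_vars S p).
Proof.
have hI := var_ideal_is_ideal S.
have -> : kill_vars S p = \sum_(m <- msupp p) (p@_m)%:MP * kill_vars S 'X_[m].
  rewrite {1}(mpolyE p) rmorph_sum; apply: eq_bigr => m _.
  by rewrite -mul_mpolyC rmorphM /= /kill_vars mmapC.
rewrite {1}(mpolyE p) -sumrB.
elim/big_ind: _ => [|a b|m _]; [exact: ideal0 | exact: idealD |].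
rewrite -mul_mpolyC -mulrBr; apply: idealMl (hI) _.
have [VIm | ->] := var_idealX_or_kill_varsX S m; last by rewrite subrr; apply: ideal0.
by rewrite (var_ideal_kill_vars VIm) subr0.
Qed.

Lemma var_idealP S p : VI S p <-> kill_vars S p = 0.
Proof.
split=> [|p0]; first exact: var_ideal_kill_vars.
by have := @var_ideal_sub_kill_vars S p; rewrite p0 subr0.
Qed.

Lemma var_ideal_prime S : is_prime (VI S).
Proof.
split; first exact: var_ideal_is_ideal.
  by move/var_idealP; rewrite rmorph1 => /eqP; rewrite oner_eq0.
move=> a b /var_idealP; rewrite rmorphM => /eqP; rewrite mulf_eq0.
by case/orP=> /eqP /var_idealP; [left | right].
Qed.

Lemma var_idealXP S j : VI S 'X_j <-> j \in S.
Proof.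
split=> [|]; last exact: var_ideal_var.
move/var_idealP; rewrite kill_varsXU /kill_var; case: ifP => // _.
by move/(congr1 (mcoeff U_(j))); rewrite mcoeffX eqxx mcoeff0 => /eqP; rewrite oner_eq0.
Qed.

Lemma var_ideal_subP S T : subid (VI S) (VI T) <-> S \subset T.
Proof.
split=> [ST | /subsetP ST].
  by apply/subsetP => j /var_ideal_var /ST /var_idealXP.
apply: gen_ideal_min => [|_ [j /ST jT ->]]; [exact: var_ideal_is_ideal | exact: var_ideal_var].
Qed.

Lemma var_ideal_prodP S (A : {set 'I_n}) : VI S (\prod_(j in A) 'X_j) <-> A :&: S != set0.
Proof.
split=> [|/set0Pn [j /setIP [jA jS]]].
  case/(prime_prod (var_ideal_prime S)) => j jA /var_idealXP jS.
  by apply/set0Pn; exists j; rewrite inE jA jS.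
by rewrite (bigD1 j) //=; apply: idealMr (var_ideal_is_ideal S) (var_ideal_var jS).
Qed.

Definition vars_of (P : poly -> Prop) : {set 'I_n} :=
  [set j | is_left (excluded_middle_informative (P 'X_j))].

Lemma mem_vars_of (P : poly -> Prop) j : j \in vars_of P <-> P 'X_j.
Proof. by rewrite inE; case: excluded_middle_informative. Qed.

Lemma var_ideal_vars_of_sub (P : poly -> Prop) : is_ideal P -> subid (VI (vars_of P)) P.
Proof. by move=> hP; apply: gen_ideal_min => // _ [j /mem_vars_of Pj ->]. Qed.

End VarIdeal.

Section IndepMod.
Variables (k : fieldType) (A : comAlgType k).
Implicit Types (P Q : A -> Prop) (f : A).

Definition indep_mod P (I : finType) (F : I -> A) : Prop :=
  forall c : I -> k, P (\sum_i c i *: F i) -> forall i, c i = 0.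

Lemma indep_mod_eq0 P (I : finType) (F : I -> A) :
  is_ideal P -> indep_mod P F -> indep_mod (fun a => a = 0) F.
Proof. by move=> hP indF c c0; apply: indF; rewrite c0; apply: ideal0. Qed.

Lemma indep_mod1 P : is_prime P -> indep_mod P (fun _ : 'I_1 => 1).
Proof.
move=> hP c; rewrite big_ord1 => Pc i; rewrite ord1.
have [// | c0_neq0] := eqVneq (c ord0) 0; case: (prime_neq1 hP).
rewrite -[1]scale1r -(mulVf c0_neq0) -scalerA -mulr_algl.
exact: idealMl (prime_is_ideal hP) Pc.
Qed.

Lemma indep_mod_powM P Q (I : finType) (F : I -> A) f M :
  is_prime P -> is_ideal Q -> subid P Q -> Q f -> ~ P f -> indep_mod Q F ->
  indep_mod P (fun x : 'I_M.+1 * I => f ^+ x.1 * F x.2).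
Proof.
move=> hP hQ PQ Qf Pf indF c Psum.
pose g (r : 'I_M.+1) := \sum_i c (r, i) *: F i.
have {}Psum : P (\sum_(r < M.+1) f ^+ r * g r).
  congr P: Psum; rewrite (eq_bigr (fun x => c (x.1, x.2) *: (f ^+ x.1 * F x.2))); last by case.
  rewrite -(pair_bigA _ (fun r i => c (r, i) *: (f ^+ r * F i))) /=.
  by apply: eq_bigr => r _; rewrite mulr_sumr; apply: eq_bigr => i _; rewrite scalerAr.
suff c0 m (r : 'I_M.+1) : val r = m -> forall i, c (r, i) = 0.
  by case=> r i; apply: c0.
elim/ltn_ind: m r => m IHm r r_m; apply: indF.
apply: prime_pow_combination hP hQ PQ Qf Pf Psum _ => s lt_sr.
by rewrite /g big1 // => i _; rewrite (IHm s) ?scale0r -?r_m.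
Qed.

End IndepMod.

Lemma exists_uniform_bound (T : Type) (Q : nat -> T -> Prop) (size : T -> nat) L :
  (forall i, (i < L)%N -> exists x, Q i x) ->
  exists E, forall i, (i < L)%N -> exists2 x, Q i x & (size x <= E)%N.
Proof.
elim: L => [|L IHL] exQ; first by exists 0%N.
have [E boundE] := IHL (fun i lt_iL => exQ i (leqW lt_iL)).
have [x Qx] := exQ L (ltnSn L).
exists (maxn E (size x)) => i; rewrite ltnS leq_eqVlt => /predU1P [-> | /boundE [y Qy le_yE]].
  by exists x; rewrite ?leq_maxr.
by exists y; rewrite // (leq_trans le_yE) ?leq_maxl.
Qed.

(* With [M = (L (E + 1))^d]: [(LME + 1)^d <= (L (E + 1) (M + 1))^d = M (M + 1)^d]. *)
Lemma chain_count_ltn d L E M : (d < L -> M = (L * E.+1) ^ d ->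
  (L * (M * E)).+1 ^ d < M.+1 ^ L)%N.
Proof.
move=> lt_dL defM.
have le_pow a b : (a <= b -> a ^ d <= b ^ d)%N.
  by move=> le_ab; elim: (d) => // j IHj; rewrite !expnS leq_mul.
have le_base : ((L * (M * E)).+1 <= L * E.+1 * M.+1)%N by nia.
apply: leq_ltn_trans (le_pow _ _ le_base) _.
rewrite expnMn -defM; apply: leq_trans (leq_pexp2l (ltn0Sn M) lt_dL).
by rewrite expnS ltn_pmul2r ?expn_gt0.
Qed.

Section KrullDimension.
Variables (k : fieldType) (n : nat).
Local Notation poly := {mpoly k[n]}.

Lemma msizeM_leq (p q : poly) a b : (msize p <= a.+1)%N -> (msize q <= b.+1)%N ->
  (msize (p * q) <= (a + b).+1)%N.
Proof.
have [-> | p_neq0] := eqVneq p 0; first by rewrite mul0r msize0.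
have [-> | q_neq0] := eqVneq q 0; first by rewrite mulr0 msize0.
by rewrite msizeM //; move: (msize p) (msize q) => sp sq; lia.
Qed.

Lemma msizeX_leq (f : poly) d r : (msize f <= d.+1)%N -> (msize (f ^+ r) <= (r * d).+1)%N.
Proof.
move=> le_f; elim: r => [|r IHr]; first by rewrite expr0 msize1.
by rewrite exprS mulSn; apply: msizeM_leq.
Qed.

Lemma card_bmultinom D : (#|{: 'X_{1..n < D}}| <= D ^ n)%N.
Proof.
rewrite cardT enumT unlock /= /bmnm_enum.
by rewrite size_pmap_sub (leq_trans (count_size _ _)) // size_map -cardE card_tuple card_ord.
Qed.

(* The coefficient matrix of [F] on the monomials of degree [< D] has a zero
   kernel, hence full row rank. *)
Lemma card_indep_msize (I : finType) (F : I -> poly) D :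
  indep_mod (fun p => p = 0) F -> (forall i, msize (F i) <= D)%N ->
  (#|I| <= #|{: 'X_{1..n < D}}|)%N.
Proof.
move=> indF szF.
pose A := \matrix_(a < #|I|, j < #|{: 'X_{1..n < D}}|) (F (enum_val a))@_(enum_val j).
suff /eqP <- : row_free A by apply: rank_leq_col.
rewrite -kermx_eq0; apply/eqP/row_matrixP => a; rewrite row0.
set v := row a (kermx A).
have vA : v *m A = 0 by rewrite -row_mul mulmx_ker row0.
apply/rowP => j; rewrite [RHS]mxE.
suff sum0 : \sum_i v 0 (enum_rank i) *: F i = 0.
  by have := indF _ sum0 (enum_val j); rewrite enum_valK.
apply/mpolyP => m; rewrite mcoeff0 raddf_sum /=.
have [lt_mD | le_Dm] := ltnP (mdeg m) D; last first.
  rewrite big1 // => i _; rewrite mcoeffZ memN_msupp_eq0 ?mulr0 //.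
  by rewrite msize_mdeg_ge ?(leq_trans (szF i)).
transitivity ((v *m A) 0 (enum_rank (BMultinom lt_mD))); last by rewrite vA mxE.
rewrite mxE (reindex (@enum_val I I)) /=; last exact/onW_bij/enum_val_bij.
by apply: eq_bigr => i _; rewrite enum_valK mcoeffZ !mxE enum_rankK.
Qed.

Section StrictChain.
Variables (L : nat) (c : nat -> poly -> Prop).
Hypothesis c_prime : forall i, (i <= L)%N -> is_prime (c i).
Hypothesis c_strict : forall i, (i < L)%N -> subid (c i) (c i.+1) /\ ~ subid (c i.+1) (c i).

Lemma strict_chain_witness_bound : exists E, forall i, (i < L)%N ->
  exists2 f, c i.+1 f /\ ~ c i f & (msize f <= E.+1)%N.
Proof.
have [|E boundE] := @exists_uniform_bound _ (fun i f => c i.+1 f /\ ~ c i f)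
  (fun f => (msize f).-1) L.
  move=> i /c_strict [_ not_sub]; apply: NNPP => no_f; apply: not_sub => f cf.
  by apply: NNPP => ncf; apply: no_f; exists f.
by exists E => i /boundE [f cf le_fE]; exists f; rewrite // (leq_trans (leqSpred _)).
Qed.

(* Descending along the chain, multiply the family by the powers [f ^+ r],
   [r <= M], of a witness [f] of the next strict inclusion. *)
Lemma strict_chain_indep_family E M :
  (forall i, (i < L)%N -> exists2 f, c i.+1 f /\ ~ c i f & (msize f <= E.+1)%N) ->
  forall j, (j <= L)%N -> exists (I : finType) (F : I -> poly),
    [/\ #|I| = (M.+1 ^ j)%N, indep_mod (c (L - j)) F &
         forall i, (msize (F i) <= (j * (M * E)).+1)%N].
Proof.
move=> witness; elim=> [|j IHj] le_jL.
  exists 'I_1, (fun _ => 1); rewrite card_ord subn0; split=> // [|_]; last by rewrite msize1.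
  exact/indep_mod1/c_prime.
have [I [F [cardI indF szF]]] := IHj (ltnW le_jL).
have lt_L : (L - j.+1 < L)%N by lia.
have [f [cf ncf] szf] := witness _ lt_L.
have L_j : (L - j.+1).+1 = (L - j)%N by lia.
rewrite L_j in cf.
exists ('I_M.+1 * I)%type, (fun x : 'I_M.+1 * I => f ^+ x.1 * F x.2); split.
- by rewrite card_prod card_ord cardI expnS.
- apply: indep_mod_powM cf ncf indF; first exact/c_prime/ltnW.
    exact/prime_is_ideal/c_prime/leq_subr.
  by rewrite -L_j; apply: (c_strict lt_L).1.
- case=> r i /=; apply: leq_trans (msizeM_leq (msizeX_leq r szf) (szF i)) _.
  by rewrite ltnS mulSn leq_add2r leq_mul // -ltnS.
Qed.

Lemma strict_prime_chain_length : (L <= n)%N.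
Proof.
have [E witness] := strict_chain_witness_bound.
rewrite leqNgt; apply/negP => lt_nL.
pose M := ((L * E.+1) ^ n)%N.
have [I [F [cardI indF szF]]] := strict_chain_indep_family M witness (leqnn L).
rewrite subnn in indF.
have indF0 := indep_mod_eq0 (prime_is_ideal (c_prime (leq0n L))) indF.
have := leq_trans (card_indep_msize indF0 szF) (card_bmultinom _).
by rewrite cardI leqNgt (chain_count_ltn lt_nL).
Qed.

End StrictChain.

End KrullDimension.

Section VarIdealHeight.
Variables (k : fieldType) (n : nat).
Local Notation VI := (@var_ideal k n).
Implicit Types (A B S T : {set 'I_n}).

Lemma var_ideal_chain_setU A B h : [disjoint A & B] -> prime_chain_to (VI A) h ->
  prime_chain_to (VI (A :|: B)) (h + #|B|).
Proof.
move=> disAB chA; have [N cardB] : {N | #|B| = N} by exists #|B|.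
rewrite cardB; elim: N B disAB cardB => [|N IHN] B disAB cardB.
  by move/eqP: cardB; rewrite cards_eq0 => /eqP ->; rewrite setU0 addn0.
have /card_gt0P [x xB] : (0 < #|B|)%N by rewrite cardB.
have cardBx : #|B :\ x| = N by move: cardB; rewrite (cardsD1 x) xB => [[]].
have := IHN _ (disjointWr (subD1set B x) disAB) cardBx.
rewrite addnS => /prime_chain_toS; apply; first exact: var_ideal_prime.
  exact/var_ideal_subP/setUS/subD1set.
move/var_ideal_subP/subsetP/(_ x); rewrite !inE xB eqxx orbT (disjointFl disAB xB).
by move/(_ isT).
Qed.

Lemma var_ideal_chain S : prime_chain_to (VI S) #|S|.
Proof.
have dis0S : [disjoint set0 & S] by rewrite disjoints_subset sub0set.
have := var_ideal_chain_setU dis0S (prime_chain_to0 (@var_ideal_prime k n set0)).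
by rewrite set0U.
Qed.

Lemma var_ideal_chain_leq S h : prime_chain_to (VI S) h -> (h <= #|S|)%N.
Proof.
have disSC : [disjoint S & ~: S] by rewrite disjoints_subset setCK.
move/(var_ideal_chain_setU disSC) => [c [c_prime _ c_strict]].
have := strict_prime_chain_length c_prime c_strict.
by rewrite -[X in (_ <= X)%N]card_ord -(cardsC S) leq_add2r.
Qed.

Lemma var_ideal_height S : prime_height (VI S) #|S|.
Proof. by split; [exact: var_ideal_chain | exact: var_ideal_chain_leq]. Qed.

Lemma prime_height_ge_card P T h :
  is_prime P -> subid (VI T) P -> prime_height P h -> (#|T| <= h)%N.
Proof.
move=> hP TP [_ maxP].
have [PT | PT] := classic (subid P (VI T)).
  by apply/maxP/(prime_chain_to_eqid (var_ideal_chain T)) => p; split; [apply: TP | apply: PT].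
exact/ltnW/maxP/(prime_chain_toS (var_ideal_chain T) hP TP PT).
Qed.

End VarIdealHeight.

Lemma bigminn_le_cond (I : finType) (P : pred I) (F : I -> nat) x j :
  P j -> (\big[minn/x]_(i | P i) F i <= F j)%N.
Proof. by rewrite -minEnat -leEnat; apply: bigmin_le_cond. Qed.

Lemma eq_bigminn (I : finType) (P : pred I) (F : I -> nat) x j :
  P j -> (forall i, P i -> F i <= x)%N ->
  exists2 i, P i & \big[minn/x]_(i | P i) F i = F i.
Proof. by move=> Pj leFx; rewrite -minEnat; have [i] := eq_bigmin j P F Pj leFx; exists i. Qed.

Section DominatingSets.
Variables (n : nat) (e : rel 'I_n).

Lemma dominating_setT : dominating e setT.
Proof. by apply/forallP => x; apply/set0Pn; exists x; rewrite setTI setU11. Qed.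

Lemma gamma_le S : dominating e S -> (gamma e <= #|S|)%N.
Proof. exact: bigminn_le_cond. Qed.

Lemma gamma_attained : exists2 S, dominating e S & gamma e = #|S|.
Proof.
by apply: eq_bigminn dominating_setT _ => S _; rewrite -[X in (_ <= X)%N]card_ord max_card.
Qed.

Lemma gamma'_ge S : minimal_dominating e S -> (#|S| <= gamma' e)%N.
Proof. exact: leq_bigmax_cond. Qed.

Lemma gamma'_attained : exists2 S, minimal_dominating e S & gamma' e = #|S|.
Proof.
have [S0 minS0 _] := minset_exists dominating_setT.
rewrite /gamma' -maxEnat.
have [S minS ->] := eq_bigmax S0 _ (fun S : {set 'I_n} => #|S|) minS0 (fun S _ => leq0n #|S|).
by exists S.
Qed.

Lemma min_deg_le x : (min_deg e <= deg e x)%N.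
Proof. exact: bigminn_le_cond. Qed.

Lemma min_deg_attained : (0 < n)%N -> exists x, min_deg e = deg e x.
Proof.
rewrite /min_deg => n_gt0; have [|x _ ->] := @eq_bigminn _ xpredT (deg e) n (Ordinal n_gt0) isT.
  by move=> x _; rewrite /deg -[X in (_ <= X)%N]card_ord max_card.
by exists x.
Qed.

Lemma card_cnbhd x : irreflexive e -> #|cnbhd e x| = (deg e x).+1.
Proof. by move=> irr; rewrite cardsU1 inE irr. Qed.

End DominatingSets.

Section ClosedNeighborhoodIdeal.
Variables (k : fieldType) (n : nat) (e : rel 'I_n).
Local Notation poly := {mpoly k[n]}.
Local Notation VI := (@var_ideal k n).
Local Notation NIe := (@NI k n e).
Local Notation NIe_dual := (@NI_dual k n e).
Implicit Types (P : poly -> Prop) (S : {set 'I_n}).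

Lemma NI_sub_var_idealP S : subid NIe (VI S) <-> dominating e S.
Proof.
split=> [NI_S | /forallP domS].
  apply/forallP => x; rewrite setIC; apply/(@var_ideal_prodP k).
  by apply: NI_S; apply: mem_gen_ideal; exists x.
apply: gen_ideal_min => [|_ [x ->]]; first exact: var_ideal_is_ideal.
by apply/(@var_ideal_prodP k); rewrite setIC.
Qed.

Lemma dominating_vars_of P : is_prime P -> subid NIe P -> dominating e (vars_of P).
Proof.
move=> hP NI_P; apply/forallP => x; apply/set0Pn.
have /(prime_prod hP) [j jN /mem_vars_of Pj] : P (\prod_(j in cnbhd e x) 'X_j).
  by apply: NI_P; apply: mem_gen_ideal; exists x.
by exists j; rewrite inE Pj jN.
Qed.

Lemma minimal_prime_NI_var_idealP S : minimal_prime NIe (VI S) <-> minimal_dominating e S.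
Proof.
split=> [[_ /NI_sub_var_idealP domS minS] | /minsetP [domS minS]].
  apply/minsetP; split=> // T domT TS; apply/eqP; rewrite eqEsubset TS /=.
  apply/var_ideal_subP; apply: minS; first exact: var_ideal_prime.
    exact/NI_sub_var_idealP.
  exact/var_ideal_subP.
split; [exact: var_ideal_prime | exact/NI_sub_var_idealP |].
move=> Q hQ NI_Q QS; have sub_Q := var_ideal_vars_of_sub (prime_is_ideal hQ).
suff <- : vars_of Q = S by [].
by apply/minS; [exact: dominating_vars_of | apply/var_ideal_subP => p /sub_Q /QS].
Qed.

Lemma minimal_prime_NI P : minimal_prime NIe P ->
  exists S, minimal_dominating e S /\ eqid P (VI S).
Proof.
case=> hP NI_P minP; have sub_P := var_ideal_vars_of_sub (prime_is_ideal hP).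
have dom := dominating_vars_of hP NI_P.
have P_sub : subid P (VI (vars_of P)).
  by apply: minP => //; [exact: var_ideal_prime | exact/NI_sub_var_idealP].
exists (vars_of P); split=> [|p]; last by split; [apply: P_sub | apply: sub_P].
apply/minsetP; split=> // T domT T_sub; apply/eqP; rewrite eqEsubset T_sub /=.
have VT_sub : subid (VI T) (VI (vars_of P)) by apply/var_ideal_subP.
apply/var_ideal_subP => p /sub_P /minP; apply; first exact: var_ideal_prime.
  exact/NI_sub_var_idealP.
by move=> q /VT_sub /sub_P.
Qed.

Lemma NI_height : ideal_height NIe (gamma e).
Proof.
split.
  have [S domS ->] := gamma_attained e.
  exists (VI S); split; first exact: var_ideal_prime.
    exact/NI_sub_var_idealP.
  exact: var_ideal_height.
move=> P h hP NI_P htP; apply: leq_trans (gamma_le (dominating_vars_of hP NI_P)) _.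
exact: prime_height_ge_card hP (var_ideal_vars_of_sub (prime_is_ideal hP)) htP.
Qed.

Lemma NI_bigheight : ideal_bigheight NIe (gamma' e).
Proof.
split.
  have [S minS ->] := gamma'_attained e.
  by exists (VI S); split; [exact/minimal_prime_NI_var_idealP | exact: var_ideal_height].
move=> P h /minimal_prime_NI [T [minT PT]] [chP _].
apply: leq_trans (gamma'_ge minT).
exact/var_ideal_chain_leq/(prime_chain_to_eqid chP PT).
Qed.

Lemma NI_dual_sub_var_cnbhd x : subid NIe_dual (VI (cnbhd e x)).
Proof.
apply: gen_ideal_min => [|_ [S [/minimal_prime_NI_var_idealP /minsetP [/forallP domS _] ->]]].
  exact: var_ideal_is_ideal.
exact/(@var_ideal_prodP k).
Qed.

Lemma prime_NI_dual_cnbhd P : is_prime P -> subid NIe_dual P ->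
  exists x, cnbhd e x \subset vars_of P.
Proof.
move=> hP dual_P; apply: NNPP => no_x.
have domC : dominating e (~: vars_of P).
  apply/forallP => x; apply/set0Pn; have /subsetPn [j jN jP] : ~~ (cnbhd e x \subset vars_of P).
    by apply/negP => sub_x; apply: no_x; exists x.
  by exists j; rewrite inE jN inE jP.
have [S minS /subsetP S_sub] := minset_exists domC.
have /(prime_prod hP) [j jS /mem_vars_of jP] : P (\prod_(j in S) 'X_j).
  by apply: dual_P; apply: mem_gen_ideal; exists S; split=> //; apply/minimal_prime_NI_var_idealP.
by have := S_sub j jS; rewrite inE jP.
Qed.

Lemma NI_dual_height : (0 < n)%N -> irreflexive e ->
  ideal_height NIe_dual (min_deg e).+1.
Proof.
move=> n_gt0 irr; split.
  have [x ->] := min_deg_attained e n_gt0.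
  exists (VI (cnbhd e x)); rewrite -card_cnbhd //; split.
  - exact: var_ideal_prime.
  - exact: NI_dual_sub_var_cnbhd.
  - exact: var_ideal_height.
move=> P h hP dual_P htP; have [y N_P] := prime_NI_dual_cnbhd hP dual_P.
apply: leq_ltn_trans (min_deg_le e y) _; rewrite -card_cnbhd //.
apply: leq_trans (subset_leq_card N_P) _.
exact: prime_height_ge_card hP (var_ideal_vars_of_sub (prime_is_ideal hP)) htP.
Qed.

End ClosedNeighborhoodIdeal.

Theorem lemma2p2 (k : fieldType) (n : nat) (e : rel 'I_n) :
  (0 < n)%N -> simple_graph e ->
  [/\ (forall P : {mpoly k[n]} -> Prop, minimal_prime (@NI k n e) P ->
         exists S : {set 'I_n},
           minimal_dominating e S /\ eqid P (@var_ideal k n S)),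
      ideal_height (@NI k n e) (gamma e),
      ideal_bigheight (@NI k n e) (gamma' e) &
      ideal_height (@NI_dual k n e) (min_deg e).+1].
Proof.
move=> n_gt0 [_ irr]; split.
- exact: minimal_prime_NI.
- exact: NI_height.
- exact: NI_bigheight.
- exact: NI_dual_height.
Qed.
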